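(* Let $G=(V,E)$ be a connected, locally finite, nonamenable, transitive graph in which every vertex has degree $d\ge3$. Let $S\subset V$ be nonempty and finite, $p\in(0,1]$, $\mu\in(0,1/2]$, and let $\bm\eta=(\eta_t)_{t\in[0,\mu^{-1}]}$ be an environment path such that, for some $\beta>0$, $$\big|\{e\in\partial_E S:\eta_t(e)=1\text{ for all }t\in[\mu^{-1}-1,\mu^{-1}]\}\big|\ge\beta\,|\partial_E S| .$$ Then $$\Phi^{\bm\eta}_S:=\frac1{|S|}\sum_{x\in S}\sum_{y\in V\setminus S}\mathbb P^{\bm\eta}\big(X_{\mu^{-1}}=y\mid X_0=x\big)\;\ge\;\frac{\beta}{de}\,\Phi(G).$$
   Context: Random walk on dynamical percolation: given $p\in(0,1]$ and $\mu>0$, each edge carries an independent rate-$\mu$ Poisson process of refresh times, at which its state is resampled to open with probability $p$ and closed with probability $1-p$; $\eta_t\in\{0,1\}^E$ is the environment at time $t$. The walker $X_t$ attempts jumps at the times of an independent rate-$1$ Poisson process, choosing a uniformly random neighbor and jumping iff the connecting edge is open at that time. $\mathbb P^{\bm\eta}$ denotes the law of the walk conditionally on the environment path $\bm\eta$. $\partial_E S$ is the set of edges with exactly one endpoint in $S$. Cheeger constant: $\Phi(G):=\inf\{|\partial_E W|/\sum_{v\in W}\deg(v): W\subset V\text{ finite, nonempty}\}$; nonamenable means $\Phi(G)>0$. *)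

From HB Require Import structures.
From mathcomp Require Import all_boot all_order all_algebra.
From mathcomp Require Import finmap.
From mathcomp Require Import all_classical all_reals all_analysis.
Set Implicit Arguments. Unset Strict Implicit. Unset Printing Implicit Defensive.
Import Order.TTheory GRing.Theory Num.Theory.
Local Open Scope classical_set_scope.
Local Open Scope ring_scope.
Local Open Scope fset_scope.

(* A locally finite graph on vertex type V is given by its adjacency lists
   nb : V -> seq V (the neighbours of x are the elements of nb x). *)
Definition simple_graph (V : eqType) (nb : V -> seq V) : Prop :=
  (forall x, uniq (nb x)) /\
  (forall x, x \notin nb x) /\
  (forall x y, (y \in nb x) = (x \in nb y)).

Definition connected_graph (V : eqType) (nb : V -> seq V) : Prop :=
  forall u v, exists p : seq V, path (fun a b => b \in nb a) u p /\ last u p = v.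

Definition transitive_graph (V : eqType) (nb : V -> seq V) : Prop :=
  forall u v, exists f g : V -> V,
    [/\ cancel f g, cancel g f,
        (forall a b, (b \in nb a) = (f b \in nb (f a))) & f u = v].

Definition regular_graph (V : eqType) (nb : V -> seq V) (d : nat) : Prop :=
  forall x, size (nb x) = d.

(* |partial_E W| : edges with exactly one endpoint in W, each counted once
   as the pair (x in W, y notin W) *)
Definition edge_bd (V : choiceType) (nb : V -> seq V) (W : {fset V}) : nat :=
  \sum_(x <- W) count (fun y => y \notin W) (nb x).

Definition vol (V : choiceType) (nb : V -> seq V) (W : {fset V}) : nat :=
  \sum_(x <- W) size (nb x).

Definition cheeger (R : realType) (V : choiceType) (nb : V -> seq V) : R :=
  inf [set r : R | exists W : {fset V},
        W != fset0 /\ r = (edge_bd nb W)%:R / (vol nb W)%:R].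

(* Environment path: eta t x y = state of the edge {x,y} at time t. *)

(* One-step kernel of the walk at a clock ring at time t: pick a uniform
   neighbour z of x, jump iff the edge {x,z} is open at time t. *)
Definition ring_kernel (R : realType) (V : eqType) (nb : V -> seq V)
    (eta : R -> V -> V -> bool) (t : R) (x z : V) : R :=
  (if (z \in nb x) && eta t x z then (size (nb x))%:R^-1 else 0) +
  (if z == x then 1 - (count (eta t x) (nb x))%:R / (size (nb x))%:R else 0).

(* walk_term T n s x y = P^eta(X_T = y, exactly n clock rings in (s,T] | X_s = x),
   for the rate-1 Poisson clock:
     n = 0 : e^{-(T-s)} 1_{x=y}
     n+1 : int_s^T e^{-(t-s)} sum_z K_t(x,z) walk_term T n t z y dt  *)
Fixpoint walk_term (R : realType) (V : eqType) (nb : V -> seq V)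
    (eta : R -> V -> V -> bool) (T : R) (n : nat) (s : R) (x y : V) : \bar R :=
  match n with
  | 0 => (expR (- (T - s)) * (x == y)%:R)%:E
  | n'.+1 =>
      (\int[@lebesgue_measure R]_(t in `[s, T])
         ((expR (- (t - s)))%:E *
          \sum_(z <- x :: nb x) ((ring_kernel nb eta t x z)%:E *
                                  walk_term nb eta T n' t z y)))%E
  end.

Definition trans_prob (R : realType) (V : eqType) (nb : V -> seq V)
    (eta : R -> V -> V -> bool) (T : R) (x y : V) : \bar R :=
  (\sum_(n <oo) walk_term nb eta T n 0 x y)%E.

Definition Phi_eta (R : realType) (V : choiceType) (nb : V -> seq V)
    (eta : R -> V -> V -> bool) (T : R) (S : {fset V}) : \bar R :=
  ((#|` S|%:R^-1 : R)%:E *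
   \sum_(x <- S) \esum_(y in [set y : V | y \notin S]) trans_prob nb eta T x y)%E.

Definition open_bd (R : realType) (V : choiceType) (nb : V -> seq V)
    (eta : R -> V -> V -> bool) (T : R) (S : {fset V}) : nat :=
  \sum_(x <- S) count (fun y => (y \notin S) &&
                       `[< forall t : R, (T - 1 <= t <= T)%R -> eta t x y >]) (nb x).

(* Conditionally on the environment, P(X_T = y | X_0 = x) = e^{-T} sum_k m_k(0, x, y),
   where m_k(s, x, y) integrates, over k ring times in [s, T], products of one-ring
   kernels ([walk_mass]).
   Spread a weight phi (initially the indicator of S) on a neighbourhood of S and
   let E_n(s, phi) be the weighted sum of m_k(s, ., .), k <= n, over endpoints
   outside S. Split the first ring time at T - 1.  A ring in [T - 1, T] moves the
   weight sitting at x in S out of S along each open boundary edge with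
   probability at least 1/d, and weight missing from S is already outside, so
   these rings contribute at least c = |open boundary| / d; earlier rings push
   phi one step and recurse.  Hence E_n(s) >= c sum_{j<n} (T-1-s)^j / j!, which
   tends to c e^{T-1}.  Multiplying by e^{-T} and using |d_E S| >= Phi(G) d |S|
   gives the bound. *)

From HB Require Import structures.
From mathcomp Require Import all_boot all_order all_algebra.
From mathcomp Require Import finmap.
From mathcomp Require Import all_classical all_reals all_analysis.
From mathcomp Require Import ring lra.
From mathcomp Require Import measurable_realfun.
Import Order.TTheory GRing.Theory Num.Theory.
Set Implicit Arguments. Unset Strict Implicit. Unset Printing Implicit Defensive.
Local Open Scope classical_set_scope.
Local Open Scope ring_scope.

Section SeqSums.
Variable V : eqType.

Lemma big_uniq_subset (M : Type) (idx : M) (op : Monoid.com_law idx)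
    (U L : seq V) (g : V -> M) :
  uniq U -> uniq L -> {subset L <= U} ->
  (forall x, x \in U -> x \notin L -> g x = idx) ->
  \big[op/idx]_(x <- U) g x = \big[op/idx]_(x <- L) g x.
Proof.
elim: L U => [|l L IH] U U_uniq L_uniq LU g_idx.
  by rewrite big_nil big_seq big1 // => x xU; apply: g_idx.
have lU : l \in U by apply: LU; rewrite inE eqxx.
rewrite (big_rem l lU) big_cons; congr (op _ _).
move: L_uniq => /= /andP[lL L_uniq].
apply: IH => //; first exact: rem_uniq.
  move=> x xL; have xl : x != l by apply: contraNneq lL => <-.
  by rewrite (mem_rem_uniq _ U_uniq) inE xl /=; apply: LU; rewrite inE xL orbT.
move=> x; rewrite mem_rem_uniq // inE => /andP[xl xU] xL.
by apply: g_idx => //; rewrite inE negb_or xl.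
Qed.

Lemma ler_sum_support (R : numDomainType) (U L : seq V) (f : V -> R) :
  uniq U -> uniq L -> (forall x, x \in L -> 0 <= f x) ->
  (forall x, x \in U -> x \notin L -> f x = 0) ->
  \sum_(x <- U) f x <= \sum_(x <- L) f x.
Proof.
elim: U L => [|u U IH] L U_uniq L_uniq f_ge0 f_out.
  by rewrite big_nil big_seq sumr_ge0.
move: U_uniq => /= /andP[uU U_uniq].
rewrite big_cons; have [uL|uL] := boolP (u \in L).
  rewrite (big_rem u uL) lerD2l; apply: IH => //.
  - exact: rem_uniq.
  - by move=> x; rewrite (mem_rem_uniq _ L_uniq) inE => /andP[_]; apply: f_ge0.
  - move=> x xU; rewrite (mem_rem_uniq _ L_uniq) inE negb_and negbK.
    have xu : x != u by apply: contraNneq uU => <-.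
    by rewrite (negbTE xu) /= => xL; apply: f_out => //; rewrite inE xU orbT.
rewrite f_out ?inE ?eqxx // add0r; apply: IH => // x xU xL.
by apply: f_out => //; rewrite inE xU orbT.
Qed.

Lemma sum_if_const (R : numDomainType) (s : seq V) (P : pred V) (c : R) :
  \sum_(z <- s) (if P z then c else 0) = (count P s)%:R * c.
Proof.
rewrite -big_mkcond /= -sum1_count natr_sum mulr_suml.
by apply: eq_bigr => i _; rewrite mul1r.
Qed.

Lemma sum_eq_indicator (R : numDomainType) (Y : seq V) x :
  uniq Y -> \sum_(y <- Y) ((x == y)%:R : R) = (x \in Y)%:R.
Proof.
move=> Y_uniq; rewrite (eq_bigr (fun y => if x == y then 1 else 0)); last first.
  by move=> y _; case: eqP.
rewrite sum_if_const mulr1 (eq_count (a2 := pred1 x)); last by move=> y /=; rewrite eq_sym.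
by rewrite count_uniq_mem.
Qed.

End SeqSums.

Lemma measurable_fun_ifb (R : realType) (b : R -> bool) (c1 c2 : R) :
  measurable [set t | b t] -> measurable_fun setT (fun t => if b t then c1 else c2).
Proof.
move=> b_meas; apply: measurable_fun_ifT => //.
apply: (@measurable_fun_bool _ _ _ _ true).
by rewrite setTI (_ : b @^-1` [set true] = [set t | b t]) //; apply/seteqP; split.
Qed.

Lemma nonincreasing_emeasurable (R : realType) (f : R -> \bar R) :
  (forall s t, s <= t -> (f t <= f s)%E) -> measurable_fun [set: R] f.
Proof.
move=> f_nonincr mD; apply: (measurability _ (ErealGenOInfty.measurableE R)) => //.
move=> _ [_ [x ->] <-]; apply: measurableI => //.
apply: is_interval_measurable => s t /=.
rewrite !in_itv/= !andbT => fs ft u /andP[su ut].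
by rewrite in_itv /= andbT (lt_le_trans ft (f_nonincr _ _ ut)).
Qed.

Lemma disjoint_itv_cc_oc (R : realType) (s a b : R) :
  [disjoint `[s, a]%classic & `]a, b]%classic].
Proof.
rewrite disj_set2E; apply/eqP/seteqP; split => // t [] /=.
by rewrite !in_itv /= => /andP[_ ta] /andP[a_lt _]; lra.
Qed.

Section RingKernel.
Variables (R : realType) (V : eqType) (nb : V -> seq V) (d : nat)
  (eta : R -> V -> V -> bool).
Hypotheses (nb_simple : simple_graph nb) (nb_regular : regular_graph nb d)
  (eta_sym : forall t x y, eta t x y = eta t y x)
  (eta_meas : forall x y, measurable [set t : R | eta t x y]).

Local Notation K := (ring_kernel nb eta).

Lemma uniq_self_nb x : uniq (x :: nb x).
Proof. by case: nb_simple => nb_uniq [nb_irr _] /=; rewrite nb_irr nb_uniq. Qed.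

Lemma stay_prob_ge0 t x :
  0 <= 1 - (count (eta t x) (nb x))%:R / (size (nb x))%:R :> R.
Proof.
have [->|deg_gt0] := posnP (size (nb x)); first by rewrite invr0 mulr0 subr0.
by rewrite subr_ge0 ler_pdivrMr ?ltr0n // mul1r ler_nat count_size.
Qed.

Lemma ring_kernel_ge0 t x z : 0 <= K t x z.
Proof.
by rewrite /ring_kernel; apply: addr_ge0; case: ifP => // _; apply: stay_prob_ge0.
Qed.

Lemma ring_kernel_out t x z : z \notin x :: nb x -> K t x z = 0.
Proof.
rewrite inE negb_or => /andP[zx zn].
by rewrite /ring_kernel (negbTE zn) (negbTE zx) /= addr0.
Qed.

Lemma ring_kernel_sum1 t x : \sum_(z <- x :: nb x) K t x z = 1.
Proof.
case: nb_simple => _ [nb_irr _].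
rewrite big_cons /ring_kernel (negbTE (nb_irr x)) /= eqxx add0r.
rewrite (eq_big_seq (fun z => if eta t x z then (size (nb x))%:R^-1 else 0)).
  by rewrite sum_if_const; ring.
move=> z zn; have -> : (z == x) = false.
  by apply/negbTE; apply: contraNneq (nb_irr x) => zx; rewrite -{1}zx.
by rewrite zn /= addr0.
Qed.

Lemma ring_kernel_sym t x z : K t x z = K t z x.
Proof.
case: nb_simple => _ [_ nb_sym].
rewrite /ring_kernel !nb_regular nb_sym eta_sym; congr (_ + _).
by case: eqP => [->|]; rewrite ?eqxx // eq_sym => /eqP /negbTE ->.
Qed.

Lemma ring_kernel_colsum_le1 t (U : seq V) z : uniq U -> \sum_(x <- U) K t x z <= 1.
Proof.
move=> U_uniq; rewrite (eq_bigr (fun x => K t z x)); last by move=> x _; rewrite ring_kernel_sym.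
rewrite -(ring_kernel_sum1 t z); apply: ler_sum_support => //.
- exact: uniq_self_nb.
- by move=> x _; apply: ring_kernel_ge0.
- by move=> x _; apply: ring_kernel_out.
Qed.

Lemma ring_kernel_open t x y : y \in nb x -> eta t x y -> d%:R^-1 <= K t x y.
Proof.
move=> yx open_xy; rewrite /ring_kernel yx open_xy /= nb_regular lerDl.
by case: eqP => // _; rewrite -(nb_regular x) stay_prob_ge0.
Qed.

Lemma measurable_ring_kernel x z : measurable_fun setT (fun t => K t x z).
Proof.
rewrite /ring_kernel; apply: measurable_realfun.measurable_funD.
  case: (boolP (z \in nb x)) => zn /=; last exact: measurable_cst.
  exact: measurable_fun_ifb.
case: eqP => _; last exact: measurable_cst.
apply: measurable_realfun.measurable_funB; first exact: measurable_cst.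
apply: measurable_realfun.measurable_funM; last exact: measurable_cst.
rewrite (_ : (fun t => _) = (fun t => \sum_(y <- nb x) (if eta t x y then 1 else 0) : R)).
  by apply: measurable_sum => y; apply: measurable_fun_ifb.
by apply/funext => t; rewrite sum_if_const mulr1.
Qed.

End RingKernel.

Section WalkMass.
Variables (R : realType) (V : eqType) (nb : V -> seq V) (eta : R -> V -> V -> bool)
  (T : R).
Hypothesis eta_meas : forall x y, measurable [set t : R | eta t x y].

Local Notation K := (ring_kernel nb eta).

(* [walk_term] without its factor [expR (- (T - s))]: the clock density
   [expR (- (t - s))] factorises along the successive ring times. *)
Fixpoint walk_mass (n : nat) (s : R) (x y : V) : \bar R :=
  match n with
  | 0 => ((x == y)%:R)%:E
  | n'.+1 => (\int[@lebesgue_measure R]_(t in `[s, T])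
         \sum_(z <- x :: nb x) ((K t x z)%:E * walk_mass n' t z y))%E
  end.

Definition walk_step n t x y :=
  (\sum_(z <- x :: nb x) ((K t x z)%:E * walk_mass n t z y))%E.

Lemma walk_mass_ge0 n s x y : (0 <= walk_mass n s x y)%E.
Proof.
elim: n s x y => [|n IH] s x y /=; first by rewrite lee_fin.
apply: integral_ge0 => t _; apply: sume_ge0 => z _.
by apply: mule_ge0 => //; rewrite lee_fin ring_kernel_ge0.
Qed.

Lemma walk_step_ge0 n t x y : (0 <= walk_step n t x y)%E.
Proof.
apply: sume_ge0 => z _.
by apply: mule_ge0; rewrite ?lee_fin ?ring_kernel_ge0 ?walk_mass_ge0.
Qed.

Lemma measurable_ring_kernelE x z : measurable_fun setT (fun t => (K t x z)%:E).
Proof. by apply/measurable_EFinP; exact: measurable_ring_kernel. Qed.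

Lemma measurable_walk_mass n x y : measurable_fun setT (fun s => walk_mass n s x y).
Proof.
elim: n x y => [|n IH] x y /=; first exact: measurable_cst.
apply: nonincreasing_emeasurable => s s' ss'.
apply: ge0_subset_integral.
- exact: measurable_itv.
- exact: measurable_itv.
- apply: measurable_funS (_ : measurable_fun setT _) => //.
  apply: emeasurable_sum => z.
  by apply: emeasurable_funM; [exact: measurable_ring_kernelE | exact: IH].
- by move=> t _; exact: walk_step_ge0.
- by apply: subset_itvr; rewrite bnd_simp.
Qed.

Lemma measurable_walk_step n x y : measurable_fun setT (fun t => walk_step n t x y).
Proof.
apply: emeasurable_sum => z; apply: emeasurable_funM; last exact: measurable_walk_mass.
exact: measurable_ring_kernelE.
Qed.

Lemma walk_termE n s x y :
  walk_term nb eta T n s x y = ((expR (- (T - s)))%:E * walk_mass n s x y)%E.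
Proof.
elim: n s x y => [|n IH] s x y /=; first by rewrite EFinM.
rewrite -ge0_integralZl_EFin ?expR_ge0 //; last 2 first.
- by move=> t _; exact: walk_step_ge0.
- exact: measurable_funS (measurable_walk_step n x y).
apply: eq_integral => t _; under eq_bigr do rewrite IH.
have -> : (expR (- (T - s)))%:E = ((expR (- (t - s)))%:E * (expR (- (T - t)))%:E)%E.
  by rewrite -EFinM -expRD; congr (_%:E); congr expR; ring.
rewrite -muleA; congr (_ * _)%E.
rewrite ge0_sume_distrr; last first.
  by move=> z _; apply: mule_ge0; rewrite ?lee_fin ?ring_kernel_ge0 ?walk_mass_ge0.
by apply: eq_bigr => z _; rewrite muleCA.
Qed.

End WalkMass.

Section TruncatedExp.
Variable R : realType.

Definition exp_trunc (n : nat) (u : R) := \sum_(j < n) u ^+ j / (j`!)%:R.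

Lemma exp_truncS n u : exp_trunc n.+1 u = 1 + \sum_(j < n) u ^+ j.+1 / (j.+1`!)%:R.
Proof. by rewrite /exp_trunc big_ord_recl /= expr0 fact0 divr1. Qed.

Lemma exp_trunc_ge0 n u : 0 <= u -> 0 <= exp_trunc n u.
Proof. by move=> u_ge0; apply: sumr_ge0 => j _; rewrite divr_ge0 // exprn_ge0. Qed.

Lemma measurable_exp_trunc n a : measurable_fun setT (fun t : R => exp_trunc n (a - t)).
Proof.
apply: measurable_sum => j; apply: measurable_funM; last exact: measurable_cst.
apply: measurable_funX; apply: measurable_funB; first exact: measurable_cst.
exact: measurable_id.
Qed.

Lemma exp_trunc_approx (a c : R) : 1 < c -> exists n, expR a / c <= exp_trunc n a.
Proof.
move=> c_gt1; have c_gt0 : 0 < c by apply: lt_trans c_gt1.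
have exp_lt : expR a / c < limn (@series R^o (exp_coeff a)).
  rewrite [X in _ < X](_ : _ = expR a); last by rewrite expRE /pseries -exp_coeffE.
  by rewrite ltr_pdivrMr // ltr_pMr ?expR_gt0.
have [N _ HN] := cvgr_gt _ (is_cvg_series_exp_coeff a) _ exp_lt.
exists N; apply: ltW; apply: (lt_le_trans (HN N (leqnn N))).
by rewrite /exp_trunc -(big_mkord xpredT (fun j => a ^+ j / (j`!)%:R)).
Qed.

Definition taylor_term_poly (a : R) (j : nat) : {poly R} :=
  (j`!%:R)^-1 *: (a%:P - 'X) ^+ j.

Lemma taylor_term_polyE a j t : (taylor_term_poly a j).[t] = (a - t) ^+ j / (j`!)%:R.
Proof. by rewrite /taylor_term_poly hornerZ horner_exp !hornerE mulrC. Qed.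

Lemma deriv_taylor_term_poly a j : (taylor_term_poly a j.+1)^`() = - taylor_term_poly a j.
Proof.
rewrite /taylor_term_poly derivZ deriv_exp derivB derivC derivX sub0r /=.
rewrite mulNr mul1r mulNrn scalerN; congr (- _).
rewrite -scalerMnr scalerMnl; congr (_ *: _).
by rewrite factS natrM invfM -mulr_natr mulrAC mulVf ?pnatr_eq0 // mul1r.
Qed.

Lemma integral_exp_trunc n s a : s < a ->
  (\int[@lebesgue_measure R]_(t in `[s, a]) (exp_trunc n (a - t))%:E =
   (\sum_(j < n) (a - s) ^+ j.+1 / (j.+1`!)%:R)%:E)%E.
Proof.
move=> sa.
pose p : {poly R} := \sum_(j < n) taylor_term_poly a j.
pose F : {poly R} := - \sum_(j < n) taylor_term_poly a j.+1.
have pE t : p.[t] = exp_trunc n (a - t).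
  by rewrite /p horner_sum; apply: eq_bigr => j _; rewrite taylor_term_polyE.
have FE t : F.[t] = - \sum_(j < n) (a - t) ^+ j.+1 / (j.+1`!)%:R.
  rewrite /F hornerN horner_sum; congr (- _).
  by apply: eq_bigr => j _; rewrite taylor_term_polyE.
have dF : F^`() = p.
  rewrite /F derivN raddf_sum -sumrN; apply: eq_bigr => j _.
  by rewrite [X in - X]deriv_taylor_term_poly opprK.
under eq_integral => t _ do rewrite -pE.
rewrite (continuous_FTC2 (F := horner F)) //.
- rewrite !FE subrr (eq_bigr (fun _ => 0)); last by move=> j _; rewrite expr0n /= mul0r.
  by rewrite big1 // oppr0 sub0e -EFinN opprK.
- by apply: derivable_within_continuous => x _; exact: derivable_horner.
- split.
  + by move=> x _; exact: derivable_horner.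
  + by apply: cvg_at_right_filter; exact: continuous_horner.
  + by apply: cvg_at_left_filter; exact: continuous_horner.
- by move=> x _; rewrite -derivE dF.
Qed.

Lemma integral_exp_trunc_ge n (c s a : R) (f : R -> \bar R) :
  0 <= c -> s <= a -> measurable_fun `[s, a] f ->
  (forall t, s <= t <= a -> ((c * exp_trunc n (a - t))%:E <= f t)%E) ->
  ((c * \sum_(j < n) (a - s) ^+ j.+1 / (j.+1`!)%:R)%:E <=
   \int[@lebesgue_measure R]_(t in `[s, a]) f t)%E.
Proof.
move=> c_ge0 sa f_meas f_ge.
have c_trunc_ge0 t : t <= a -> 0 <= c * exp_trunc n (a - t).
  by move=> ta; rewrite mulr_ge0 // exp_trunc_ge0 // subr_ge0.
have [s_lt_a|a_le_s] := ltP s a; last first.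
  have s_eq : s = a by apply/le_anti; rewrite sa a_le_s.
  rewrite s_eq subrr big1 ?mulr0; last by move=> j _; rewrite expr0n /= mul0r.
  apply: integral_ge0 => t; rewrite /= in_itv /= => /andP[a_le_t ta].
  by apply: le_trans (f_ge t _); rewrite ?lee_fin ?c_trunc_ge0 // s_eq a_le_t.
apply: (@le_trans _ _ (\int[@lebesgue_measure R]_(t in `[s, a])
    ((c * exp_trunc n (a - t))%:E))%E); last first.
  apply: ge0_le_integral => //.
  - by move=> t; rewrite /= in_itv /= => /andP[_ ta]; rewrite lee_fin c_trunc_ge0.
  - apply: measurable_funS (_ : measurable_fun setT _) => //.
    apply/measurable_EFinP; apply: measurable_funM; first exact: measurable_cst.
    exact: measurable_exp_trunc.
under eq_integral do rewrite EFinM.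
rewrite ge0_integralZl_EFin // ?integral_exp_trunc // -?EFinM //.
- move=> t; rewrite /= in_itv /= => /andP[_ ta].
  by rewrite lee_fin exp_trunc_ge0 // subr_ge0.
- apply/measurable_EFinP; apply: measurable_funS (measurable_exp_trunc n a) => //.
Qed.

End TruncatedExp.

Section Neighbourhoods.
Variables (V : eqType) (nb : V -> seq V) (S : seq V).

Fixpoint nbhd (r : nat) : seq V :=
  match r with
  | 0 => S
  | r'.+1 => undup (nbhd r' ++ flatten [seq nb x | x <- nbhd r'])
  end.

Lemma nbhd_uniq r : uniq S -> uniq (nbhd r).
Proof. by case: r => //= r _; exact: undup_uniq. Qed.

Lemma nbhd_subS r : {subset nbhd r <= nbhd r.+1}.
Proof. by move=> x xr /=; rewrite mem_undup mem_cat xr. Qed.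

Lemma nbhd_mono r r' : (r <= r')%N -> {subset nbhd r <= nbhd r'}.
Proof.
move=> /subnK <-; elim: (r' - r)%N => [|k IH] x xr //.
by rewrite addSn; apply: nbhd_subS; apply: IH.
Qed.

Lemma nbhd_step r x : x \in nbhd r -> {subset x :: nb x <= nbhd r.+1}.
Proof.
move=> xr z; rewrite inE => /orP[/eqP ->|zn]; first exact: nbhd_subS.
rewrite /= mem_undup mem_cat; apply/orP; right.
by apply/flatten_mapP; exists x.
Qed.

End Neighbourhoods.

Section ExitMass.
Variables (R : realType) (V : eqType) (nb : V -> seq V) (d : nat)
  (eta : R -> V -> V -> bool) (T : R) (S : seq V) (N : nat).
Hypotheses (nb_simple : simple_graph nb) (nb_regular : regular_graph nb d)
  (d_gt0 : (0 < d)%N) (eta_sym : forall t x y, eta t x y = eta t y x)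
  (eta_meas : forall x y, measurable [set t : R | eta t x y]) (S_uniq : uniq S).

Local Notation K := (ring_kernel nb eta).
Local Notation U := (nbhd nb S N).
Local Notation Y := [seq y <- U | y \notin S].

Let U_uniq : uniq U. Proof. exact: nbhd_uniq. Qed.
Let Y_uniq : uniq Y. Proof. exact: filter_uniq. Qed.
Let S_sub_U : {subset S <= U}. Proof. exact: (@nbhd_mono _ nb S 0 N). Qed.
Let self_nb_uniq x : uniq (x :: nb x). Proof. exact: uniq_self_nb. Qed.

Definition open_last x y := `[< forall t : R, T - 1 <= t <= T -> eta t x y >].

Definition open_out x := count (fun y => (y \notin S) && open_last x y) (nb x).

Definition open_rate : R := (\sum_(x <- S) open_out x)%:R / d%:R.

(* [phi] weights starting points; [exit_mass k s phi] is the weighted mass,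
   started at time [s] and moved by [k] clock rings, that ends in [U] minus [S]
   (up to the factor [expR (- (T - s))], see [walk_termE]). *)
Definition exit_mass k s (phi : V -> R) : \bar R :=
  (\sum_(x <- U) ((phi x)%:E * \sum_(y <- Y) walk_mass nb eta T k s x y))%E.

Definition exit_mass_step k t (phi : V -> R) : \bar R :=
  (\sum_(x <- U) ((phi x)%:E * \sum_(y <- Y) walk_step nb eta T k t x y))%E.

Definition push t (phi : V -> R) z := \sum_(x <- U) phi x * K t x z.

Definition admissible r (phi : V -> R) :=
  [/\ forall x, 0 <= phi x <= 1, forall x, x \notin nbhd nb S r -> phi x = 0
    & (size S)%:R <= \sum_(x <- U) phi x].

Lemma admissible_ge0 r phi : admissible r phi -> forall x, 0 <= phi x.
Proof. by case=> phi01 _ _ x; case/andP: (phi01 x). Qed.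

Lemma admissible_indicator : admissible 0 (fun x => (x \in S)%:R).
Proof.
split.
- by move=> x; case: (x \in S); rewrite /= ?lexx ?ler01.
- by move=> x /= /negbTE ->.
- rewrite (big_uniq_subset _ (L := S)) //; last by move=> x _ /negbTE ->.
  rewrite -sum1_size natr_sum le_eqVlt; apply/orP; left; apply/eqP.
  by apply: eq_big_seq => x ->.
Qed.

Lemma admissible_nb_sub r phi : (r < N)%N -> admissible r phi ->
  forall x, phi x != 0 -> {subset x :: nb x <= U}.
Proof.
move=> rN [_ phi_supp _] x phi_x z zx; apply: (nbhd_mono rN).
have xr : x \in nbhd nb S r by apply: contraNT phi_x => /phi_supp ->.
exact: nbhd_step xr _ zx.
Qed.

Lemma exit_mass0 s phi : exit_mass 0 s phi = (\sum_(x <- U) phi x * (x \notin S)%:R)%:E.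
Proof.
rewrite /exit_mass -sumEFin big_seq_cond [RHS]big_seq_cond.
apply: eq_bigr => x /andP[xU _].
by rewrite sumEFin /= sum_eq_indicator // mem_filter xU andbT -EFinM.
Qed.

Lemma exit_mass_ge0 k s phi : (forall x, 0 <= phi x) -> (0 <= exit_mass k s phi)%E.
Proof.
move=> phi_ge0; apply: sume_ge0 => x _; apply: mule_ge0; first by rewrite lee_fin.
by apply: sume_ge0 => y _; exact: walk_mass_ge0.
Qed.

Lemma push_ge0 t phi : (forall x, 0 <= phi x) -> forall z, 0 <= push t phi z.
Proof.
by move=> phi_ge0 z; apply: sumr_ge0 => x _; rewrite mulr_ge0 ?ring_kernel_ge0.
Qed.

Lemma push_admissible r t phi : (r < N)%N -> admissible r phi -> admissible r.+1 (push t phi).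
Proof.
move=> rN [phi01 phi_supp phi_mass].
have phi_ge0 x : 0 <= phi x by case/andP: (phi01 x).
split.
- move=> z; rewrite push_ge0 //=.
  apply: le_trans (ring_kernel_colsum_le1 nb_simple nb_regular eta_sym t z U_uniq).
  apply: ler_sum => x _; rewrite -[leRHS]mul1r.
  by apply: ler_wpM2r; [exact: ring_kernel_ge0 | case/andP: (phi01 x)].
- move=> z z_out; apply: big1_seq => x /andP[_ xU].
  have [xr|xr] := boolP (x \in nbhd nb S r); last by rewrite phi_supp // mul0r.
  rewrite ring_kernel_out ?mulr0 //; apply: contra z_out.
  exact: nbhd_step xr z.
- apply: (le_trans phi_mass); rewrite /push exchange_big /=.
  rewrite le_eqVlt; apply/orP; left; apply/eqP.
  rewrite big_seq [RHS]big_seq; apply: eq_bigr => x xU; rewrite -mulr_sumr.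
  have [xr|xr] := boolP (x \in nbhd nb S r); last by rewrite phi_supp // mul0r.
  rewrite (big_uniq_subset _ (L := x :: nb x)) ?ring_kernel_sum1 ?mulr1 //.
    by move=> z zx; apply: (nbhd_mono rN); exact: nbhd_step xr _ zx.
  by move=> z _ zx; apply: ring_kernel_out.
Qed.

Lemma open_out_le_deg x : (open_out x <= d)%N.
Proof. by rewrite /open_out -(nb_regular x) count_size. Qed.

(* Mass of [phi] that is missing from [S] has already left [S]. *)
Lemma open_rate_le r phi : admissible r phi ->
  open_rate <= \sum_(x <- U) phi x * (x \notin S)%:R +
               \sum_(x <- S) phi x * (open_out x)%:R / d%:R.
Proof.
move=> [phi01 _ phi_mass].
have mass_split : \sum_(x <- U) phi x =
    \sum_(x <- S) phi x + \sum_(x <- U) phi x * (x \notin S)%:R.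
  rewrite (eq_bigr (fun x => phi x * (x \in S)%:R + phi x * (x \notin S)%:R)); last first.
    by move=> x _; case: (x \in S); rewrite /= ?mulr0 ?mulr1 ?addr0 ?add0r.
  rewrite big_split /=; congr (_ + _).
  rewrite (big_uniq_subset _ (L := S)) //; last by move=> x _ xS; rewrite (negbTE xS) mulr0.
  by rewrite big_seq [RHS]big_seq; apply: eq_bigr => x ->; rewrite mulr1.
have open_deficit : \sum_(x <- S) (open_out x)%:R / d%:R -
    \sum_(x <- S) phi x * (open_out x)%:R / d%:R <= (size S)%:R - \sum_(x <- S) phi x.
  rewrite -sumrB -sum1_size natr_sum -sumrB; apply: ler_sum => x _.
  have /andP[phi_x_ge0 phi_x_le1] := phi01 x.
  have out_le1 : (open_out x)%:R / d%:R <= 1 :> R.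
    by rewrite ler_pdivrMr ?ltr0n // mul1r ler_nat open_out_le_deg.
  have out_ge0 : 0 <= (open_out x)%:R / d%:R :> R by rewrite divr_ge0.
  rewrite -mulrA -{1}(mul1r ((open_out x)%:R / d%:R)) -mulrBl.
  by rewrite -[leRHS]mulr1 ler_wpM2l // subr_ge0.
rewrite /open_rate natr_sum mulr_suml; lra.
Qed.

Lemma open_out_le_push t phi : T - 1 <= t <= T -> (0 < N)%N -> (forall x, 0 <= phi x) ->
  \sum_(x <- S) phi x * (open_out x)%:R / d%:R <=
  \sum_(z <- U) push t phi z * (z \notin S)%:R.
Proof.
move=> tT N_gt0 phi_ge0.
rewrite /push [leRHS](eq_bigr (fun z => \sum_(x <- U) phi x * (K t x z * (z \notin S)%:R)));
  last by move=> z _; rewrite mulr_suml; apply: eq_bigr => x _; rewrite mulrA.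
rewrite exchange_big /=.
apply: le_trans (ler_sum_support (U := S) (L := U) _ _ _ _) => //; last 2 first.
- by move=> x _; apply: sumr_ge0 => z _; rewrite !mulr_ge0 ?ring_kernel_ge0.
- by move=> x xS xU; move: (S_sub_U xS); rewrite (negbTE xU).
rewrite big_seq [leRHS]big_seq; apply: ler_sum => x xS.
rewrite -mulr_sumr -mulrA; apply: ler_wpM2l => //.
have nb_sub_U : {subset x :: nb x <= U}.
  by move=> z zx; apply: (nbhd_mono N_gt0); exact: (@nbhd_step _ nb S 0 x xS).
rewrite (big_uniq_subset _ (L := x :: nb x)) //; last first.
  by move=> z _ zx; rewrite ring_kernel_out ?mul0r.
rewrite big_cons xS /= mulr0 add0r /open_out -[X in X%:R * _]sum1_count natr_sum mulr_suml.
rewrite big_mkcond /= big_seq [leRHS]big_seq; apply: ler_sum => z zn.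
case: ifP => [/andP[zS /asboolP z_open]|_]; last by rewrite mulr_ge0 ?ring_kernel_ge0.
by rewrite zS mulr1 mul1r; apply: ring_kernel_open => //; exact: z_open.
Qed.

Lemma exit_mass_step_integral k s phi : (forall x, 0 <= phi x) ->
  exit_mass k.+1 s phi =
  (\int[@lebesgue_measure R]_(t in `[s, T]) exit_mass_step k t phi)%E.
Proof.
move=> phi_ge0; rewrite /exit_mass_step ge0_integral_sum //; last 2 first.
- move=> x; apply: emeasurable_funM; first exact: measurable_cst.
  apply: measurable_funS (_ : measurable_fun setT _) => //.
  by apply: emeasurable_sum => y; exact: measurable_walk_step.
- move=> x t _; apply: mule_ge0; first by rewrite lee_fin.
  by apply: sume_ge0 => y _; exact: walk_step_ge0.
apply: eq_bigr => x _; rewrite ge0_integralZl_EFin //; last 2 first.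
- by move=> t _; apply: sume_ge0 => y _; exact: walk_step_ge0.
- apply: measurable_funS (_ : measurable_fun setT _) => //.
  by apply: emeasurable_sum => y; exact: measurable_walk_step.
congr (_ * _)%E; rewrite ge0_integral_sum //.
- by move=> y; apply: measurable_funS (measurable_walk_step _ _ _ _ _ _).
- by move=> y t _; exact: walk_step_ge0.
Qed.

(* Fubini for finite sums: the first ring of the walk is moved onto [phi]. *)
Lemma exit_mass_stepE k t phi : (forall x, 0 <= phi x) ->
  (forall x, phi x != 0 -> {subset x :: nb x <= U}) ->
  exit_mass_step k t phi = exit_mass k t (push t phi).
Proof.
move=> phi_ge0 phi_sub.
have Y_mass_ge0 z : (0 <= \sum_(y <- Y) walk_mass nb eta T k t z y)%E.
  by apply: sume_ge0 => y _; exact: walk_mass_ge0.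
rewrite /exit_mass /push /exit_mass_step.
rewrite [RHS](eq_bigr (fun z => \sum_(x <- U) ((phi x * K t x z)%:E *
      \sum_(y <- Y) walk_mass nb eta T k t z y))%E); last first.
  move=> z _; rewrite -sumEFin ge0_sume_distrl // => x _.
  by rewrite lee_fin mulr_ge0 ?ring_kernel_ge0.
rewrite [RHS]exchange_big /= big_seq [RHS]big_seq; apply: eq_bigr => x xU.
have [->|phi_x] := eqVneq (phi x) 0.
  by rewrite mul0e big1 // => z _; rewrite mul0r mul0e.
rewrite /walk_step exchange_big /=.
rewrite [X in (_ * X)%E](eq_bigr (fun z =>
    (K t x z)%:E * \sum_(y <- Y) walk_mass nb eta T k t z y))%E; last first.
  by move=> z _; rewrite ge0_sume_distrr // => y _; exact: walk_mass_ge0.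
rewrite -(big_uniq_subset _ (U := U)) //; last 2 first.
- exact: phi_sub.
- by move=> z _ zx; rewrite ring_kernel_out // mul0e.
rewrite ge0_sume_distrr; last by move=> z _; rewrite mule_ge0 ?lee_fin ?ring_kernel_ge0.
by apply: eq_bigr => z _; rewrite muleA EFinM.
Qed.

Lemma measurable_exit_mass_push k phi :
  measurable_fun setT (fun t => exit_mass k t (push t phi)).
Proof.
apply: emeasurable_sum => z; apply: emeasurable_funM.
  apply/measurable_EFinP; apply: measurable_sum => x.
  by apply: measurable_funM; [exact: measurable_cst | exact: measurable_ring_kernel].
by apply: emeasurable_sum => y; exact: measurable_walk_mass.
Qed.

Lemma exit_mass_sumS n s phi : (forall x, 0 <= phi x) ->
  (forall x, phi x != 0 -> {subset x :: nb x <= U}) ->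
  (\sum_(k < n.+2) exit_mass k s phi = exit_mass 0 s phi +
   \int[@lebesgue_measure R]_(t in `[s, T]) \sum_(k < n.+1) exit_mass k t (push t phi))%E.
Proof.
move=> phi_ge0 phi_sub; rewrite big_ord_recl ge0_integral_sum //; last 2 first.
- by move=> k; apply: measurable_funS (measurable_exit_mass_push k phi).
- by move=> k t _; apply: exit_mass_ge0; exact: push_ge0.
congr (_ + _)%E; apply: eq_bigr => k _.
rewrite exit_mass_step_integral //; apply: eq_integral => t _.
exact: exit_mass_stepE.
Qed.

Lemma integral_last_unit_ge n phi : (0 < N)%N -> (forall x, 0 <= phi x) ->
  ((\sum_(x <- S) phi x * (open_out x)%:R / d%:R)%:E <=
   \int[@lebesgue_measure R]_(t in `](T - 1)%R, T]) \sum_(k < n.+1) exit_mass k t (push t phi))%E.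
Proof.
move=> N_gt0 phi_ge0; set c := \sum_(x <- S) _.
have -> : c%:E = (\int[@lebesgue_measure R]_(t in `](T - 1)%R, T]) (cst c%:E) t)%E.
  rewrite integral_cst // [X in (_ * X)%E]lebesgue_measure_itv /= lte_fin ifT; last lra.
  by rewrite -EFinB -EFinM; congr (_%:E); ring.
apply: ge0_le_integral => //.
- by move=> t _; rewrite lee_fin sumr_ge0 // => x _; rewrite divr_ge0 // mulr_ge0.
- apply: measurable_funS (_ : measurable_fun setT _) => //.
  by apply: emeasurable_sum => k; exact: measurable_exit_mass_push.
move=> t; rewrite /= in_itv /= => /andP[t_gt t_le].
rewrite big_ord_recl /= -[leLHS]adde0; apply: leeD.
  by rewrite exit_mass0 lee_fin; apply: open_out_le_push; rewrite // t_le ltW.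
by apply: sume_ge0 => k _; apply: exit_mass_ge0; exact: push_ge0.
Qed.

(* Induction on [n], splitting the first ring time at [T - 1]: a ring in
   [[T - 1, T]] contributes [open_rate] (with [open_rate_le]), earlier rings
   contribute the integral of the induction hypothesis. *)
Lemma exit_mass_lower_bound n : (n <= N)%N -> forall s, 0 <= s <= T - 1 ->
  forall phi, admissible (N - n) phi ->
  ((open_rate * exp_trunc n (T - 1 - s))%:E <= \sum_(k < n.+1) exit_mass k s phi)%E.
Proof.
elim: n => [|n IH] nN s /andP[s_ge0 sT] phi phi_adm.
  rewrite /exp_trunc big_ord0 mulr0; apply: sume_ge0 => k _.
  exact: exit_mass_ge0 (admissible_ge0 phi_adm).
have phi_ge0 := admissible_ge0 phi_adm.
have rN : (N - n.+1 < N)%N by rewrite ltn_subrL (leq_trans _ nN).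
rewrite exit_mass_sumS //; last exact: admissible_nb_sub phi_adm.
rewrite (@itv_bndbnd_setU _ _ _ (BRight (T - 1))) ?bnd_simp //; last lra.
rewrite ge0_integral_setU //; last 3 first.
- apply: measurable_funS (_ : measurable_fun setT _) => //.
  by apply: emeasurable_sum => k; exact: measurable_exit_mass_push.
- by move=> t _; apply: sume_ge0 => k _; apply: exit_mass_ge0; exact: push_ge0.
- exact: disjoint_itv_cc_oc.
have first_part : ((open_rate * \sum_(j < n) (T - 1 - s) ^+ j.+1 / (j.+1`!)%:R)%:E <=
    \int[@lebesgue_measure R]_(t in `[s, (T - 1)%R]) \sum_(k < n.+1) exit_mass k t (push t phi))%E.
  apply: integral_exp_trunc_ge => //.
  - by rewrite /open_rate divr_ge0.
  - apply: measurable_funS (_ : measurable_fun setT _) => //.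
    by apply: emeasurable_sum => k; exact: measurable_exit_mass_push.
  move=> t /andP[st tT]; apply: IH; first exact: ltnW.
    by rewrite tT (le_trans s_ge0 st).
  by rewrite -subnSK //; exact: push_admissible.
rewrite exit_mass0 exp_truncS mulrDr mulr1.
set out_mass := \sum_(x <- U) _.
pose open_mass := \sum_(x <- S) phi x * (open_out x)%:R / d%:R.
apply: (@le_trans _ _ ((out_mass + open_mass +
    open_rate * \sum_(j < n) (T - 1 - s) ^+ j.+1 / (j.+1`!)%:R)%:E)).
  by rewrite lee_fin lerD2r; exact: open_rate_le phi_adm.
rewrite !EFinD -addeA leeD2l // addeC.
apply: leeD; first exact: first_part.
exact: integral_last_unit_ge (leq_ltn_trans (leq0n n) nN) phi_ge0.
Qed.

Lemma exit_mass_indicator k s : exit_mass k s (fun x => (x \in S)%:R) =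
  (\sum_(x <- S) \sum_(y <- Y) walk_mass nb eta T k s x y)%E.
Proof.
rewrite /exit_mass (big_uniq_subset _ (L := S)) //; last first.
  by move=> x _ xS; rewrite (negbTE xS) mul0e.
by rewrite big_seq [RHS]big_seq; apply: eq_bigr => x xS; rewrite xS mul1e.
Qed.

Lemma sum_walk_term_exit n s :
  (\sum_(x <- S) \sum_(y <- Y) \sum_(k < n) walk_term nb eta T k s x y =
   (expR (- (T - s)))%:E * \sum_(k < n) exit_mass k s (fun x => (x \in S)%:R))%E.
Proof.
under eq_bigr do under eq_bigr do under eq_bigr do rewrite (walk_termE _ _ eta_meas).
under eq_bigr do rewrite (exchange_big _ _ (index_enum _)).
rewrite (exchange_big _ _ (index_enum _)) /= ge0_sume_distrr; last first.
  by move=> k _; apply: exit_mass_ge0 => x; rewrite ler0n.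
apply: eq_bigr => k _; rewrite exit_mass_indicator ge0_sume_distrr; last first.
  by move=> x _; apply: sume_ge0 => y _; exact: walk_mass_ge0.
apply: eq_bigr => x _; rewrite ge0_sume_distrr // => y _; exact: walk_mass_ge0.
Qed.

End ExitMass.

Lemma sum_walk_term_le_esum (R : realType) (V : choiceType) (nb : V -> seq V)
    (eta : R -> V -> V -> bool) (T : R) (A : set V) (Y : seq V) x n :
  (forall x y, measurable [set t : R | eta t x y]) ->
  uniq Y -> (forall y, y \in Y -> A y) ->
  (\sum_(y <- Y) \sum_(k < n) walk_term nb eta T k 0 x y <=
   \esum_(y in A) trans_prob nb eta T x y)%E.
Proof.
move=> eta_meas Y_uniq YA; apply: esum_ge; exists [set` Y]; first by split; [exact: finite_seq|].
rewrite -fsbig_seq //; apply: lee_sum => y _.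
rewrite -(big_mkord xpredT (fun k => walk_term nb eta T k 0 x y)).
apply: nneseries_lim_ge => k _ _.
by rewrite walk_termE //; apply: mule_ge0; rewrite ?lee_fin ?expR_ge0 ?walk_mass_ge0.
Qed.

Lemma exit_prob_ge (R : realType) (V : choiceType) (nb : V -> seq V) (d : nat)
    (eta : R -> V -> V -> bool) (T : R) (S : {fset V}) n :
  simple_graph nb -> regular_graph nb d -> (0 < d)%N ->
  (forall t x y, eta t x y = eta t y x) ->
  (forall x y, measurable [set t : R | eta t x y]) -> 1 <= T ->
  ((expR (- T) * (open_rate nb d eta T S * exp_trunc n (T - 1)))%:E <=
   \sum_(x <- S) \esum_(y in [set y | y \notin S]) trans_prob nb eta T x y)%E.
Proof.
move=> nb_simple nb_regular d_gt0 eta_sym eta_meas T_ge1.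
have S_uniq : uniq S := fset_uniq S.
set Y := [seq y <- nbhd nb S n | y \notin S].
have Y_uniq : uniq Y by rewrite filter_uniq // nbhd_uniq.
apply: (@le_trans _ _ (\sum_(x <- S) \sum_(y <- Y) \sum_(k < n.+1)
    walk_term nb eta T k 0 x y)%E); last first.
  apply: lee_sum => x _; apply: sum_walk_term_le_esum => // y.
  by rewrite mem_filter => /andP[].
rewrite (sum_walk_term_exit _ _ _ eta_meas S_uniq) subr0.
rewrite EFinM lee_wpmul2l ?lee_fin ?expR_ge0 //.
have := exit_mass_lower_bound nb_simple nb_regular d_gt0 eta_sym eta_meas S_uniq
  (leqnn n) (_ : 0 <= 0 <= T - 1).
rewrite subnn subr0; apply; first by rewrite lexx subr_ge0.
exact: admissible_indicator.
Qed.

Lemma cheeger_le_edge_ratio (R : realType) (V : choiceType) (nb : V -> seq V)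
    (W : {fset V}) :
  W != fset0 -> cheeger R nb <= (edge_bd nb W)%:R / (vol nb W)%:R.
Proof.
move=> W_neq0; apply: ge_inf; last by exists W.
by exists 0 => r [W' [_ ->]]; rewrite divr_ge0.
Qed.

Lemma vol_regular (V : choiceType) (nb : V -> seq V) d (W : {fset V}) :
  regular_graph nb d -> vol nb W = (#|` W| * d)%N.
Proof.
move=> nb_regular; rewrite /vol (eq_bigr (fun _ => d)); last by move=> x _; rewrite nb_regular.
by rewrite big_const_seq count_predT iter_addn_0 mulnC.
Qed.

Lemma open_rate_ge_cheeger (R : realType) (V : choiceType) (nb : V -> seq V) (d : nat)
    (eta : R -> V -> V -> bool) (T beta : R) (S : {fset V}) :
  regular_graph nb d -> (0 < d)%N -> S != fset0 -> 0 <= beta ->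
  beta * (edge_bd nb S)%:R <= (open_bd nb eta T S)%:R ->
  beta * cheeger R nb * #|` S|%:R <= open_rate nb d eta T S.
Proof.
move=> nb_regular d_gt0 S_neq0 beta_ge0 open_ge.
rewrite /open_rate ler_pdivlMr ?ltr0n //; apply: le_trans open_ge.
rewrite -!mulrA; apply: ler_wpM2l => //.
rewrite -ler_pdivlMr ?mulr_gt0 ?ltr0n ?cardfs_gt0 //.
by rewrite -natrM -(vol_regular S nb_regular); exact: cheeger_le_edge_ratio.
Qed.

Lemma Phi_eta_ge_open_rate (R : realType) (V : choiceType) (nb : V -> seq V) (d : nat)
    (eta : R -> V -> V -> bool) (T : R) (S : {fset V}) :
  simple_graph nb -> regular_graph nb d -> (1 < d)%N ->
  (forall t x y, eta t x y = eta t y x) ->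
  (forall x y, measurable [set t : R | eta t x y]) -> 1 <= T -> S != fset0 ->
  ((open_rate nb d eta T S / (d%:R * expR 1 * #|` S|%:R))%:E <= Phi_eta nb eta T S)%E.
Proof.
move=> nb_simple nb_regular d_gt1 eta_sym eta_meas T_ge1 S_neq0.
have d_gt0 : (0 < d)%N := ltnW d_gt1.
have d_gt1R : 1 < d%:R :> R by rewrite ltr1n.
have [n exp_n] := exp_trunc_approx (T - 1) d_gt1R.
have key := exit_prob_ge S n nb_simple nb_regular d_gt0 eta_sym eta_meas T_ge1.
rewrite /Phi_eta; apply: le_trans (lee_wpmul2l _ key); last by rewrite lee_fin invr_ge0.
rewrite -EFinM lee_fin.
have -> : expR (- T) = (expR (T - 1) * expR 1)^-1.
  by rewrite -expRD -expRN; congr expR; ring.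
set c := open_rate _ _ _ _ _; set P := exp_trunc n (T - 1) in exp_n *.
set B := expR (T - 1) in exp_n *; set E := expR 1; set D := d%:R in exp_n *.
set z := #|` S|%:R.
have [B_gt0 E_gt0 D_gt0] : [/\ 0 < B, 0 < E & 0 < D] by rewrite !expR_gt0 ltr0n.
have z_gt0 : 0 < z by rewrite ltr0n cardfs_gt0.
have c_ge0 : 0 <= c by rewrite divr_ge0.
rewrite -(ler_pM2r (_ : 0 < z * D * B * E)) ?mulr_gt0 //.
have -> : c / (D * E * z) * (z * D * B * E) = c * B by field; rewrite !gt_eqF.
have -> : z^-1 * ((B * E)^-1 * (c * P)) * (z * D * B * E) = c * (P * D).
  by field; rewrite !gt_eqF.
by rewrite ler_wpM2l // -ler_pdivrMr.
Qed.

Unset Implicit Arguments. Set Strict Implicit.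
Local Open Scope fset_scope.

Theorem mainTheorem19 (R : realType) (V : choiceType) (nb : V -> seq V) (d : nat)
  (S : {fset V}) (p mu beta : R) (eta : R -> V -> V -> bool) :
  simple_graph nb -> connected_graph nb -> transitive_graph nb ->
  regular_graph nb d -> (3 <= d)%N ->
  0 < cheeger R nb ->
  S != fset0 ->
  0 < p <= 1 -> 0 < mu <= 2^-1 ->
  (forall t x y, eta t x y = eta t y x) ->
  (forall x y, measurable [set t : R | eta t x y]) ->
  0 < beta ->
  beta * (edge_bd nb S)%:R <= (open_bd nb eta mu^-1 S)%:R ->
  (((beta / (d%:R * expR 1)) * cheeger R nb)%:E <= Phi_eta nb eta mu^-1 S)%E.
Proof.
move=> nb_simple _ _ nb_regular d_ge3 cheeger_gt0 S_neq0 _ /andP[mu_gt0 mu_le]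
  eta_sym eta_meas beta_gt0 open_ge.
have d_gt1 : (1 < d)%N by apply: leq_trans d_ge3.
have T_ge1 : 1 <= mu^-1 by rewrite invf_ge1 //; lra.
apply: le_trans (Phi_eta_ge_open_rate nb_simple nb_regular d_gt1 eta_sym eta_meas T_ge1 S_neq0).
have := open_rate_ge_cheeger nb_regular (ltnW d_gt1) S_neq0 (ltW beta_gt0) open_ge.
rewrite lee_fin; set c := open_rate _ _ _ _ _ => c_ge.
rewrite ler_pdivlMr ?mulr_gt0 ?ltr0n ?expR_gt0 ?cardfs_gt0 ?(ltnW d_gt1) //.
rewrite [leLHS](_ : _ = beta * cheeger R nb * #|` S|%:R) //.
by field; rewrite !gt_eqF ?ltr0n ?expR_gt0 ?(ltnW d_gt1).
Qed.
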